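(* Let $G$ be the complete graph on $\{0,\dots,n\}$ oriented by $i\to j$ iff $i<j$. Then the polynomials $\mathbf{P}_s$, $s\in S_n$, form a basis of the space $$\operatorname{soc}(\mathcal{P}(G)):=\operatorname{span}\{p_{G\setminus T}: T\in\mathbb{B}(G)\}\subset\mathbb{R}[t(1),\dots,t(n)].$$
   Context: Polynomials are in variables $t=(t(1),\dots,t(n))$, and set $t(0):=0$. To the edge of $G$ between $i<j$ (vector $e_j-e_i$, $e_0:=0$) associate $p_x(t)=t(j)-t(i)$; for a set $Y$ of edges oriented as in $G$, $p_Y:=\prod_{x\in Y}p_x$. $\mathbb{B}(G)$ is the set of spanning trees of $G$ (edge sets), and $G\setminus T$ is the set of edges of $G$ not in $T$. $S_n$ is the set of permutations of $\{1,\dots,n\}$, extended by $s(0):=0$. For $s\in S_n$, $G^s$ is the reorientation of $G$ in which the edge $\{s(i),s(j)\}$ with $i<j$ is oriented $s(i)\to s(j)$, with associated polynomial $t(s(j))-t(s(i))$. The path tree $T_s$ has edges $\{s(k-1),s(k)\}$, $k=1,\dots,n$. Define $\mathbf{P}_s:=\prod (t(s(j))-t(s(i)))$, the product over all pairs $0\le i<j\le n$ such that $\{s(i),s(j)\}$ is not an edge of $T_s$ (i.e. $j\ne i+1$); this is $p$ of $G^s\setminus T_s$ with edges oriented as in $G^s$. *)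

From HB Require Import structures.
From mathcomp Require Import all_boot all_order all_algebra all_fingroup.
Set Implicit Arguments. Unset Strict Implicit. Unset Printing Implicit Defensive.
Import Order.TTheory GRing.Theory Num.Theory.
Local Open Scope ring_scope.

(* Vertices of G are 'I_n.+1 = {0,...,n}.  A point t = (t(1),...,t(n)) is
   t : 'I_n -> R; ext t extends it to vertices with t(0) := 0
   (vertex k >= 1 corresponds to variable index k-1). *)
Definition ext (R : ringType) (n : nat) (t : 'I_n -> R) (i : 'I_n.+1) : R :=
  match unlift ord0 i with Some j => t j | None => 0 end.

Definition tree_adj (n : nat) (T : {set {set 'I_n.+1}}) : rel 'I_n.+1 :=
  fun u v => [set u; v] \in T.

Definition spanning_tree (n : nat) (T : {set {set 'I_n.+1}}) : bool :=
  [&& [forall e in T, #|e| == 2%N], #|T| == n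
    & [forall u, forall v, connect (tree_adj T) u v]].

Definition pGT (R : ringType) (n : nat) (T : {set {set 'I_n.+1}})
    (t : 'I_n.+1 -> R) : R :=
  \prod_(i : 'I_n.+1) \prod_(j : 'I_n.+1 | (i < j)%N && ([set i; j] \notin T))
     (t j - t i).

(* Elements of S_n: permutations of {0..n} fixing 0. *)
Definition fix0 (n : nat) (s : {perm 'I_n.+1}) : bool := s ord0 == ord0.

Definition Ps (R : ringType) (n : nat) (s : {perm 'I_n.+1})
    (t : 'I_n.+1 -> R) : R :=
  \prod_(i : 'I_n.+1) \prod_(j : 'I_n.+1 | (i < j)%N && (val j != (val i).+1))
     (t (s j) - t (s i)).

(* P_s is, up to sign, p_{G \ T_s} for the path tree T_s: both are products over
   the pairs that are not consecutive along s.  Conversely, list the vertices of a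
   spanning tree T from 0 so that each new vertex x hangs from a single earlier
   vertex w; up to sign p_{G \ T} is then the product of the factors t x - t u over
   earlier u <> w.  Multiplying a path product by these factors stays in the span
   of path products rooted at 0: writing t x - t a = (t x - t w) - (t a - t w)
   slides x along the path until it sits next to w.  For independence, set
   t v := t 0 for the second vertex v of some path: the paths not starting with
   0, v vanish, the others collapse to prod_u (t u - t 0) times path products on
   the remaining vertices, and as this factor is a nonzero polynomial we may
   induct on the number of vertices. *)

From HB Require Import structures.
From mathcomp Require Import all_boot all_order all_algebra all_fingroup.
From mathcomp Require Import ring zify.
Set Implicit Arguments. Unset Strict Implicit. Unset Printing Implicit Defensive.
Import Order.TTheory GRing.Theory Num.Theory.
Local Open Scope ring_scope.

Section SeqProducts.

Variables (R : comNzRingType) (X : Type).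
Implicit Types (t : X -> R) (p q l : seq X) (P : rel X).

(* [Pseq t l] is the paper's P for the path [l] (the pairs not consecutive in
   [l]); [pair_prod P t l] is p_Y for the [P]-related pairs Y, oriented along [l]. *)
Fixpoint Pseq t l : R :=
  if l is x :: l' then \prod_(u <- behead l') (t u - t x) * Pseq t l' else 1.

Fixpoint pair_prod P t l : R :=
  if l is x :: l' then \prod_(u <- l' | P x u) (t u - t x) * pair_prod P t l' else 1.

Lemma prod_subrC t x q :
  \prod_(u <- q) (t u - t x) = (-1) ^+ size q * \prod_(u <- q) (t x - t u).
Proof.
elim: q => [|y q IH]; first by rewrite !big_nil expr0 mulr1.
by rewrite !big_cons IH /= exprS; ring.
Qed.

Lemma Pseq_shift t a l : Pseq (fun u => t u - a) l = Pseq t l.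
Proof.
elim: l => [|x l IH] //=; rewrite IH; congr (_ * _).
by apply: eq_bigr => y _; rewrite opprB addrA subrK.
Qed.

Lemma Pseq_rcons2 t p w x :
  Pseq t (rcons (rcons p w) x) = Pseq t (rcons p w) * \prod_(u <- p) (t x - t u).
Proof.
elim: p => [|y p IH]; first by rewrite /= !big_nil !mulr1.
rewrite [rcons _ _]/= [Pseq _ (y :: _)]/= IH.
rewrite [rcons (y :: p) w]/= [Pseq _ (y :: rcons p w)]/= big_cons.
case: p IH => [|z p] IH /=; first by rewrite !big_cons !big_nil; ring.
by rewrite -!cats1 !big_cat !big_cons !big_nil /=; ring.
Qed.

Lemma Pseq_insert t p w x a q :
  Pseq t (p ++ w :: x :: a :: q) =
  Pseq t (p ++ w :: a :: q) * (t a - t w) *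
    \prod_(u <- q) (t u - t x) * \prod_(u <- p) (t x - t u).
Proof.
elim: p => [|y p IH]; first by rewrite /= !big_cons !big_nil; ring.
rewrite cat_cons [Pseq _ (y :: _)]/= IH [Pseq _ (y :: (p ++ _))]/= big_cons.
case: p IH => [|z p] IH /=; first by rewrite !big_cons; ring.
by rewrite !big_cat !big_cons /=; ring.
Qed.

Lemma pair_prod_rcons P t l x :
  pair_prod P t (rcons l x) = pair_prod P t l * \prod_(u <- l | P u x) (t x - t u).
Proof.
elim: l => [|y l IH] /=; first by rewrite !big_nil.
rewrite IH -cats1 big_cat big_cons big_nil /= big_cons.
by case: (P y x); rewrite ?mulr1; ring.
Qed.

End SeqProducts.

Section SeqProductsEq.

Variables (R : comNzRingType) (X : eqType).
Implicit Types (t : X -> R) (p q l : seq X).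

Lemma Pseq_eq t t' l : {in l, t =1 t'} -> Pseq t l = Pseq t' l.
Proof.
elim: l => [|x l IH] //= tt'.
have tl : {in l, t =1 t'} by move=> u ul; apply: tt'; rewrite inE ul orbT.
rewrite IH // tt' ?mem_head //; congr (_ * _); apply: eq_big_seq => u /mem_behead ul.
by rewrite tt' // inE ul orbT.
Qed.


Variables (P : rel X).
Hypothesis symP : symmetric P.

Lemma pair_prod_cat_cons t p x q :
  pair_prod P t (p ++ x :: q) = (-1) ^+ count (P x) p * pair_prod P t (x :: p ++ q).
Proof.
elim: p => [|y p IH]; first by rewrite mul1r.
have pxq : perm_eq (p ++ x :: q) (x :: p ++ q) by rewrite -cat1s perm_catCA.
rewrite cat_cons [pair_prod _ _ (y :: _)]/= IH /= (perm_big _ pxq) /= !big_cons symP.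
by case: (P x y); rewrite /= ?exprS; ring.
Qed.

Lemma pair_prod_perm (W W' : seq X) : perm_eq W W' ->
  exists k : nat, forall t : X -> R, pair_prod P t W = (-1) ^+ k * pair_prod P t W'.
Proof.
elim: W W' => [|x W IH] W' pW.
  by move: pW; rewrite perm_sym => /perm_nilP ->; exists 0%N => t; rewrite mul1r.
have xW' : x \in W' by rewrite -(perm_mem pW) mem_head.
move: pW; case/splitPr: xW' => p q pW.
have pW1 : perm_eq W (p ++ q).
  by rewrite -(perm_cons x) (perm_trans pW) // -cat1s perm_catCA.
have [k Ek] := IH _ pW1.
exists (k + count (P x) p)%N => t.
by rewrite pair_prod_cat_cons /= Ek (perm_big _ pW1) exprD -mulrA signrMK; ring.
Qed.

End SeqProductsEq.

Section IotaProducts.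

Variables (R : comNzRingType) (X : Type) (f : nat -> X) (t : X -> R).

Lemma Pseq_iota m k : Pseq t (map f (iota m k)) =
  \prod_(i <- iota m k) \prod_(j <- iota m k | (i < j)%N && (j != i.+1)) (t (f j) - t (f i)).
Proof.
elim: k m => [|k IH] m; first by rewrite /= big_nil.
rewrite [iota m k.+1]/= map_cons [Pseq _ _]/= IH big_cons; congr (_ * _).
  rewrite big_cons ltnn /=.
  case: k {IH} => [|k]; first by rewrite /= !big_nil.
  rewrite [iota m.+1 k.+1]/= big_cons ltnSn eqxx /= big_map.
  rewrite big_seq_cond [RHS]big_seq_cond; apply: eq_bigl => j.
  case: (boolP (j \in iota m.+2 k)) => //=; rewrite mem_iota => /andP [mj _].
  by rewrite (ltn_trans (ltnSn m)) //= neq_ltn mj orbT.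
apply: eq_big_seq => i; rewrite mem_iota => /andP [mi _].
by rewrite big_cons ltnNge ltnW.
Qed.

Lemma pair_prod_iota (P : rel X) m k : pair_prod P t (map f (iota m k)) =
  \prod_(i <- iota m k) \prod_(j <- iota m k | (i < j)%N && P (f i) (f j)) (t (f j) - t (f i)).
Proof.
elim: k m => [|k IH] m; first by rewrite /= big_nil.
rewrite [iota m k.+1]/= map_cons [pair_prod _ _ _]/= IH big_cons; congr (_ * _).
  rewrite big_cons ltnn /= big_map big_seq_cond [RHS]big_seq_cond; apply: eq_bigl => j.
  by case: (boolP (j \in iota m.+1 k)) => //; rewrite mem_iota => /andP [-> _].
apply: eq_big_seq => i; rewrite mem_iota => /andP [mi _].
by rewrite big_cons ltnNge ltnW.
Qed.

End IotaProducts.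

Section Span.

Variables (R : comNzRingType) (X : eqType).
Implicit Types (G : pred (seq X)) (f g : (X -> R) -> R) (t : X -> R) (p q l : seq X).

Definition Pspan G f := exists L : seq (R * seq X),
  all (fun cl => G cl.2) L /\ forall t, f t = \sum_(cl <- L) cl.1 * Pseq t cl.2.

Lemma Pspan_ext G f g : f =1 g -> Pspan G f -> Pspan G g.
Proof. by move=> fg [L [GL Ef]]; exists L; split => // t; rewrite -fg. Qed.

Lemma Pspan_sub G G' f : {subset G <= G'} -> Pspan G f -> Pspan G' f.
Proof.
move=> GG' [L [GL Ef]]; exists L; split => //.
by apply/allP => cl /(allP GL) /GG'.
Qed.

Lemma Pspan_Pseq G l : G l -> Pspan G (fun t => Pseq t l).
Proof.
move=> Gl; exists [:: (1, l)]; split; first by rewrite /= Gl.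
by move=> t; rewrite big_seq1 mul1r.
Qed.

Lemma Pspan_add G f g : Pspan G f -> Pspan G g -> Pspan G (fun t => f t + g t).
Proof.
move=> [L1 [G1 E1]] [L2 [G2 E2]]; exists (L1 ++ L2); split.
  by rewrite all_cat G1 G2.
by move=> t; rewrite big_cat /= E1 E2.
Qed.

Lemma Pspan_scale G c f : Pspan G f -> Pspan G (fun t => c * f t).
Proof.
move=> [L [GL Ef]]; exists [seq (c * cl.1, cl.2) | cl <- L]; split.
  by rewrite all_map.
by move=> t; rewrite Ef big_map mulr_sumr; apply: eq_bigr => cl _ /=; rewrite mulrA.
Qed.

Lemma Pspan_sum G (I : eqType) (s : seq I) (F : I -> (X -> R) -> R) :
  (forall i, i \in s -> Pspan G (F i)) -> Pspan G (fun t => \sum_(i <- s) F i t).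
Proof.
elim: s => [|i s IH] HF.
  by exists [::]; split => // t; rewrite !big_nil.
apply: (@Pspan_ext _ (fun t => F i t + \sum_(j <- s) F j t)).
  by move=> t; rewrite big_cons.
apply: Pspan_add; first by apply: HF; rewrite mem_head.
by apply: IH => j js; apply: HF; rewrite inE js orbT.
Qed.

Lemma Pspan_mul G G' f h :
  Pspan G f -> (forall l, G l -> Pspan G' (fun t => Pseq t l * h t)) ->
  Pspan G' (fun t => f t * h t).
Proof.
move=> [L [GL Ef]] Gh.
apply: (@Pspan_ext _ (fun t => \sum_(cl <- L) cl.1 * (Pseq t cl.2 * h t))).
  by move=> t; rewrite Ef mulr_suml; apply: eq_bigr => cl _; rewrite mulrA.
apply: Pspan_sum => cl /(allP GL) Gcl.
exact/Pspan_scale/Gh.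
Qed.

Definition rooted_perm (V : seq X) (r : X) : pred (seq X) :=
  fun l => perm_eq l V && (head r l == r).

(* Write [t x - t a = (t x - t w) - (t a - t w)]: the first term hangs the leaf
   [x] one vertex earlier (induction on [q]), the second is the path through
   [w, x, a] up to sign. *)
Lemma Pspan_attach_leaf x p w q :
  Pspan (rooted_perm (x :: p ++ w :: q) (head w p))
    (fun t => Pseq t (p ++ w :: q) * \prod_(u <- p) (t x - t u) * \prod_(u <- q) (t x - t u)).
Proof.
elim: q p w => [|a q IH] p w.
  apply: (@Pspan_ext _ (fun t => Pseq t (rcons (rcons p w) x))).
    by move=> t; rewrite Pseq_rcons2 big_nil mulr1 cats1.
  apply: Pspan_Pseq; apply/andP; split; last by case: p.
  by rewrite perm_sym -cat1s perm_catCA -!cats1 -catA perm_cat2l (perm_catC [:: x]).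
have := IH (rcons p w) a.
rewrite cat_rcons (_ : head a (rcons p w) = head w p) => [hung|]; last by case: p.
have path : Pspan (rooted_perm (x :: p ++ w :: a :: q) (head w p))
    (fun t => - (-1) ^+ size q * Pseq t (p ++ w :: x :: a :: q)).
  apply/Pspan_scale/Pspan_Pseq/andP; split; last by case: (p).
  by rewrite perm_sym -cat1s perm_catCA perm_cat2l (perm_catCA [:: x] [:: w]).
apply: Pspan_ext (Pspan_add hung path) => t.
rewrite /= Pseq_insert prod_subrC -cats1 big_cat /= !big_cons !big_nil.
set A := Pseq t _; set B := \prod_(u <- p) _; set C := \prod_(u <- q) _.
have sq : (-1) ^+ size q * (-1) ^+ size q = 1 :> R by rewrite -expr2 sqrr_sign.
transitivity (A * B * C * ((t x - t w) - (-1) ^+ size q * (-1) ^+ size q * (t a - t w))).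
  by ring.
by rewrite sq; ring.
Qed.

(* Every vertex but the first is [P]-related to all earlier vertices except
   exactly one, its parent in the tree whose edges are the non-[P] pairs. *)
Definition tree_order (P : rel X) W := forall p x q,
  W = rcons p x ++ q -> p != [::] -> exists2 w, w \in p & {in p, forall u, P u x = (u != w)}.

Lemma tree_order_rcons P W x : tree_order P (rcons W x) ->
  tree_order P W /\ (W != [::] -> exists2 w, w \in W & {in W, forall u, P u x = (u != w)}).
Proof.
move=> ord; split=> [p y q eW p0|W0]; last exact: (ord W x [::] (esym (cats0 _)) W0).
by apply: (ord p y (rcons q x)) => //; rewrite eW rcons_cat.
Qed.

Lemma prod_cat_cons_neq (F : X -> R) p w q : uniq (p ++ w :: q) ->
  \prod_(u <- p ++ w :: q | u != w) F u = \prod_(u <- p) F u * \prod_(u <- q) F u.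
Proof.
have drop_w s : w \notin s -> \prod_(u <- s | u != w) F u = \prod_(u <- s) F u.
  move=> ws; rewrite big_seq_cond [RHS]big_seq_cond; apply: eq_bigl => u.
  by case: (boolP (u \in s)) => //= us; apply: contraNneq ws => <-.
rewrite cat_uniq => /and3P [_ /norP [wp _] /andP [wq _]].
by rewrite big_cat big_cons eqxx /= !drop_w.
Qed.

Lemma Pspan_pair_prod P r W : uniq (r :: W) -> tree_order P (r :: W) ->
  Pspan (rooted_perm (r :: W) r) (fun t => pair_prod P t (r :: W)).
Proof.
elim/last_ind: W => [_ _|W x IH].
  apply: (@Pspan_ext _ (fun t => Pseq t [:: r])); first by move=> t; rewrite /= !big_nil.
  by apply: Pspan_Pseq; rewrite /rooted_perm perm_refl eqxx.
rewrite -rcons_cons rcons_uniq => /andP [xW uW] /tree_order_rcons [ordW [//|w wW Pw]].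
apply: (@Pspan_ext _ (fun t => pair_prod P t (r :: W) * \prod_(u <- r :: W | P u x) (t x - t u))).
  by move=> t; rewrite pair_prod_rcons.
apply: (Pspan_mul (IH uW ordW)) => l /andP [lW /eqP hl].
have wl : w \in l by rewrite (perm_mem lW).
move: lW hl; case/splitPr: wl => p q lW hl.
have hp : head w p = r by case: (p) hl.
have ul : uniq (p ++ w :: q) by rewrite (perm_uniq lW).
apply: (@Pspan_sub (rooted_perm (x :: p ++ w :: q) (head w p))).
  move=> l' /andP [l'V]; rewrite hp => hl'; apply/andP; split => //.
  by rewrite (perm_trans l'V) // perm_sym perm_rcons perm_cons perm_sym.
apply: Pspan_ext (Pspan_attach_leaf x p w q) => t.
rewrite -mulrA -(prod_cat_cons_neq _ ul) -(perm_big _ lW) /=; congr (_ * _).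
rewrite big_seq_cond [RHS]big_seq_cond; apply: eq_bigl => u.
by case: (boolP (u \in _)) => //= ul'; rewrite Pw // -(perm_mem lW).
Qed.

End Span.

Section CoordwisePoly.

Variables (R : comNzRingType) (X : eqType).
Implicit Types (F G : (X -> R) -> R) (t : X -> R).

Definition coordwise_poly F := forall t u, exists p : {poly R},
  forall t', (forall w, w != u -> t' w = t w) -> F t' = p.[t' u].

Lemma coordwise_poly_ext F G : F =1 G -> coordwise_poly F -> coordwise_poly G.
Proof. by move=> FG pF t u; have [p Ep] := pF t u; exists p => t' t't; rewrite -FG Ep. Qed.

Lemma coordwise_poly_const c : coordwise_poly (fun=> c).
Proof. by move=> t u; exists c%:P => t' _; rewrite hornerC. Qed.

Lemma coordwise_poly_coord w : coordwise_poly (fun t => t w).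
Proof.
move=> t u; case: (eqVneq w u) => [->|wu]; first by exists 'X => t' _; rewrite hornerX.
by exists (t w)%:P => t' t't; rewrite hornerC t't.
Qed.

Lemma coordwise_polyB F G :
  coordwise_poly F -> coordwise_poly G -> coordwise_poly (fun t => F t - G t).
Proof.
move=> pF pG t u; have [p Ep] := pF t u; have [q Eq] := pG t u.
by exists (p - q) => t' t't; rewrite hornerD hornerN Ep // Eq.
Qed.

Lemma coordwise_polyD F G :
  coordwise_poly F -> coordwise_poly G -> coordwise_poly (fun t => F t + G t).
Proof.
move=> pF pG t u; have [p Ep] := pF t u; have [q Eq] := pG t u.
by exists (p + q) => t' t't; rewrite hornerD Ep // Eq.
Qed.

Lemma coordwise_polyM F G :
  coordwise_poly F -> coordwise_poly G -> coordwise_poly (fun t => F t * G t).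
Proof.
move=> pF pG t u; have [p Ep] := pF t u; have [q Eq] := pG t u.
by exists (p * q) => t' t't; rewrite hornerM Ep // Eq.
Qed.

Lemma coordwise_poly_sum (I : Type) (s : seq I) (F : I -> (X -> R) -> R) :
  (forall i, coordwise_poly (F i)) -> coordwise_poly (fun t => \sum_(i <- s) F i t).
Proof.
move=> pF; elim: s => [|i s IH].
  by apply: coordwise_poly_ext (coordwise_poly_const 0) => t; rewrite big_nil.
by apply: coordwise_poly_ext (coordwise_polyD (pF i) IH) => t; rewrite big_cons.
Qed.

Lemma coordwise_poly_prod (I : Type) (s : seq I) (F : I -> (X -> R) -> R) :
  (forall i, coordwise_poly (F i)) -> coordwise_poly (fun t => \prod_(i <- s) F i t).
Proof.
move=> pF; elim: s => [|i s IH].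
  by apply: coordwise_poly_ext (coordwise_poly_const 1) => t; rewrite big_nil.
by apply: coordwise_poly_ext (coordwise_polyM (pF i) IH) => t; rewrite big_cons.
Qed.

Lemma coordwise_poly_Pseq l : coordwise_poly (fun t => Pseq t l).
Proof.
elim: l => [|x l IH] /=; first exact: coordwise_poly_const.
apply: coordwise_polyM IH; apply: coordwise_poly_prod => u.
exact: coordwise_polyB (coordwise_poly_coord u) (coordwise_poly_coord x).
Qed.

End CoordwisePoly.

Section Vanishing.

Variables (R : numDomainType) (X : eqType).

Lemma poly_eq0_off (p : {poly R}) a : (forall x, x != a -> p.[x] = 0) -> p = 0.
Proof.
move=> p0; pose rs := [seq a + i.+1%:R | i <- iota 0 (size p)].
apply: (@roots_geq_poly_eq0 _ _ rs); last by rewrite size_map size_iota.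
  apply/allP => _ /mapP [i _ ->]; apply/eqP/p0.
  by rewrite -subr_eq0 addrC addKr pnatr_eq0.
by rewrite map_inj_uniq ?iota_uniq // => i j /addrI /eqP; rewrite eqr_nat => /eqP [].
Qed.

Lemma coordwise_poly_eq0 (G : (X -> R) -> R) r (S : seq X) :
  r \notin S -> coordwise_poly G ->
  (forall t, {in S, forall u, t u != t r} -> G t = 0) -> G =1 fun=> 0.
Proof.
elim: S => [|u S IH]; first by move=> _ _ G0 t; apply: G0.
rewrite inE negb_or => /andP [ru rS] pG G0.
apply: IH => // t tS; have [p Ep] := pG t u.
suff p0 : p = 0 by rewrite (Ep t) // p0 horner0.
apply: (@poly_eq0_off _ (t r)) => x xr.
pose tx w := if w == u then x else t w.
have tx_off w : w != u -> tx w = t w by rewrite /tx => /negbTE ->.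
have -> : x = tx u by rewrite /tx eqxx.
rewrite -(Ep tx tx_off); apply: G0 => w; rewrite inE (tx_off r ru).
by case: (eqVneq w u) => [->|wu] /= wS; [rewrite /tx eqxx | rewrite tx_off // tS].
Qed.

End Vanishing.

Section Independence.

Variables (R : numDomainType) (X : eqType).
Implicit Types (t : X -> R) (l vs : seq X).

Lemma Pseq_cons2_eq t r v l :
  t v = t r -> Pseq t (r :: v :: l) = \prod_(u <- l) (t u - t r) * Pseq t (r :: l).
Proof. by move=> tv /=; rewrite tv. Qed.

Lemma Pseq_cons2_eq0 t r y l v : v \in l -> t v = t r -> Pseq t (r :: y :: l) = 0.
Proof. by move=> vl tv /=; rewrite (big_rem v vl) /= tv subrr !mul0r. Qed.

Lemma sum_Pseq_merge (I : eqType) (idx : seq I) (f : I -> seq X) (c : I -> R) r v vs t t' :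
  uniq (r :: vs) -> v \in vs -> {in idx, forall i, perm_eq (f i) vs} ->
  t' v = t r -> (forall u, u != v -> t' u = t u) ->
  \sum_(i <- idx) c i * Pseq t' (r :: f i) =
  \prod_(u <- rem v vs) (t u - t r) *
    \sum_(i <- idx | ohead (f i) == Some v) c i * Pseq t (r :: behead (f i)).
Proof.
move=> /andP [rvs uvs] vvs fvs t'v t't.
have rv : r != v by apply: contraNneq rvs => ->.
have t'r : t' v = t' r by rewrite t'v (t't r rv).
have other0 : \sum_(i <- idx | ohead (f i) != Some v) c i * Pseq t' (r :: f i) = 0.
  rewrite big_seq_cond big1 // => i /andP [iI nhv]; have := fvs i iI.
  case: (f i) nhv => [|y l] nhv fl; first by move: vvs; rewrite -(perm_mem fl).
  rewrite (@Pseq_cons2_eq0 _ _ _ _ v) ?mulr0 //.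
  move: vvs; rewrite -(perm_mem fl) inE => /orP [/eqP vy|//].
  by rewrite -vy eqxx in nhv.
rewrite (bigID (fun i => ohead (f i) == Some v) xpredT) other0 Monoid.mulm1 mulr_sumr.
rewrite big_seq_cond [RHS]big_seq_cond; apply: eq_bigr => i /andP [iI].
have := fvs i iI; case: (f i) => [|y l] // vl /eqP [yv]; rewrite yv in vl *.
have /andP [vl' _] : uniq (v :: l) by rewrite (perm_uniq vl).
have lvs : perm_eq l (rem v vs) by rewrite -(perm_cons v) (perm_trans vl) ?perm_to_rem.
have rl : r \notin l by apply: contra rvs; rewrite -(perm_mem vl) inE orbC => ->.
have t't_l : {in r :: l, t' =1 t}.
  by move=> u; rewrite inE => /orP [/eqP ->|ul]; apply: t't => //; apply: contraNneq vl' => <-.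
rewrite Pseq_cons2_eq // (Pseq_eq t't_l) -(perm_big _ lvs) /= mulrCA.
by congr (_ * (_ * _)); apply: eq_big_seq => u ul; rewrite !t't_l ?mem_head // inE ul orbT.
Qed.

Lemma Pseq_free_nil (I : eqType) r (idx : seq I) (f : I -> seq X) (c : I -> R) :
  uniq (map f idx) -> {in idx, forall i, f i = [::]} ->
  (forall t, \sum_(i <- idx) c i * Pseq t (r :: f i) = 0) -> {in idx, forall i, c i = 0}.
Proof.
case: idx => [//|j [|k idx]] uf f0 sum0 i.
  rewrite mem_seq1 => /eqP ->; have := sum0 (fun=> 0).
  by rewrite big_seq1 f0 ?mem_head //= big_nil !mulr1.
by move: uf; rewrite /= !f0 ?inE ?eqxx ?orbT.
Qed.

Lemma Pseq_free (I : eqType) r vs (idx : seq I) (f : I -> seq X) (c : I -> R) :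
  uniq (r :: vs) -> uniq (map f idx) -> {in idx, forall i, perm_eq (f i) vs} ->
  (forall t, \sum_(i <- idx) c i * Pseq t (r :: f i) = 0) -> {in idx, forall i, c i = 0}.
Proof.
move Em : (size vs) => m; elim: m vs idx f Em => [|m IH] vs idx f.
  move/eqP; rewrite size_eq0 => /eqP -> _ uf fvs.
  by apply: (Pseq_free_nil uf) => i /fvs /perm_nilP.
move=> svs urvs uf fvs sum0 i0 i0I; have /andP [rvs uvs] := urvs.
have := fvs i0 i0I; case Ei0: (f i0) => [|v l] fi0; first by move: svs; rewrite -(perm_size fi0).
have vvs : v \in vs by rewrite -(perm_mem fi0) mem_head.
pose idx' := [seq i <- idx | ohead (f i) == Some v].
have f'vs : {in idx', forall i, perm_eq (behead (f i)) (rem v vs)}.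
  move=> i; rewrite mem_filter => /andP [hv iI]; have := fvs i iI.
  by case: (f i) hv => [|y l'] // /eqP [->] fl; rewrite -(perm_cons v) (perm_trans fl) ?perm_to_rem.
have rvs2 : r \notin rem v vs by apply: contra rvs; apply: mem_rem.
apply: (IH (rem v vs) idx' (behead \o f)) => //.
- by rewrite size_rem // svs.
- by rewrite /= rvs2 rem_uniq.
- have : uniq (map f idx').
    by apply: subseq_uniq uf; apply/map_subseq/filter_subseq.
  have -> : map f idx' = map (cons v) (map (behead \o f) idx').
    rewrite -map_comp; apply/eq_in_map => i; rewrite mem_filter => /andP [hv _] /=.
    by case: (f i) hv => [|y l'] // /eqP [->].
  by rewrite map_inj_uniq // => l1 l2 [].
- apply: (@coordwise_poly_eq0 _ _ _ r (rem v vs) rvs2).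
  + apply: coordwise_poly_sum => i.
    exact: coordwise_polyM (coordwise_poly_const _) (coordwise_poly_Pseq _).
  move=> t tS; pose t' u := if u == v then t r else t u.
  have := sum0 t'; rewrite (sum_Pseq_merge c (t := t) urvs vvs fvs) ?/t' ?eqxx //; last first.
    by move=> u /negbTE ->.
  have prod_neq0 : \prod_(u <- rem v vs) (t u - t r) != 0.
    by rewrite prodf_seq_neq0; apply/allP => u uvs2; rewrite subr_eq0 tS.
  by move/eqP; rewrite mulf_eq0 (negbTE prod_neq0) big_filter => /eqP.
- by rewrite mem_filter Ei0 eqxx.
Qed.

End Independence.

Lemma set2_eq (T : finType) (a b c d : T) :
  [set a; b] = [set c; d] -> (a = c /\ b = d) \/ (a = d /\ b = c).
Proof.
move=> E.
have /set2P ha : a \in [set c; d] by rewrite -E set21.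
have /set2P hb : b \in [set c; d] by rewrite -E set22.
have /set2P hc : c \in [set a; b] by rewrite E set21.
have /set2P hd : d \in [set a; b] by rewrite E set22.
by case: ha hb hc hd => -> [] -> [] h [] h'; subst; tauto.
Qed.

Section CompleteGraph.

Variable n : nat.
Implicit Types (s : {perm 'I_n.+1}) (T : {set {set 'I_n.+1}}).

Lemma enum_ord_inord : enum 'I_n.+1 = map inord (iota 0 n.+1).
Proof.
rewrite -val_enum_ord -map_comp -[LHS]map_id; apply/eq_map => i /=.
by rewrite inord_val.
Qed.

Lemma prod_ord_iota2 (R : comNzRingType) (P : nat -> nat -> bool) (F : nat -> nat -> R) :
  \prod_(i < n.+1) \prod_(j < n.+1 | P i j) F i j =
  \prod_(i <- iota 0 n.+1) \prod_(j <- iota 0 n.+1 | P i j) F i j.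
Proof.
rewrite -(big_mkord xpredT (fun i => \prod_(j < n.+1 | P i j) F i j)) /index_iota subn0.
by apply: eq_bigr => i _; rewrite -big_mkord /index_iota subn0.
Qed.

Lemma Ps_Pseq (R : comNzRingType) s (t : 'I_n.+1 -> R) :
  Ps s t = Pseq t (map s (enum 'I_n.+1)).
Proof.
rewrite enum_ord_inord -map_comp Pseq_iota -prod_ord_iota2.
by apply: eq_bigr => i _; apply: eq_big => [//|j _] /=; rewrite !inord_val.
Qed.

Lemma pGT_pair_prod (R : comNzRingType) T (t : 'I_n.+1 -> R) :
  pGT T t = pair_prod (fun u v => [set u; v] \notin T) t (enum 'I_n.+1).
Proof.
rewrite enum_ord_inord pair_prod_iota.
rewrite -(prod_ord_iota2 (fun i j => (i < j)%N && ([set (inord i : 'I_n.+1); inord j] \notin T))).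
by apply: eq_bigr => i _; apply: eq_big => [j|j _] /=; rewrite !inord_val.
Qed.

Lemma perm_inord_inj s i j : (i <= n)%N -> (j <= n)%N -> s (inord i) = s (inord j) -> i = j.
Proof. by move=> ni nj /perm_inj /(congr1 (@nat_of_ord _)); rewrite !inordK. Qed.

Definition path_tree s : {set {set 'I_n.+1}} :=
  [set [set s (inord k); s (inord k.+1)] | k : 'I_n].

Lemma path_tree_mem s i j : (i < j <= n)%N ->
  ([set s (inord i); s (inord j)] \in path_tree s) = (j == i.+1).
Proof.
move=> /andP [ij jn]; apply/imsetP/eqP => [[k _ /set2_eq E]|->]; last first.
  have ilt : (i < n)%N by lia.
  by exists (Ordinal ilt).
have kn := ltn_ord k.
by case: E => [[/perm_inord_inj E1 /perm_inord_inj E2]|[/perm_inord_inj E1 /perm_inord_inj E2]];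
  move: E1 E2; lia.
Qed.

Lemma path_tree_connect s k : (k <= n)%N ->
  connect (tree_adj (path_tree s)) (s ord0) (s (inord k)).
Proof.
elim: k => [|k IH] kn.
  by rewrite (_ : inord 0 = ord0) ?connect0 //; apply: val_inj; rewrite /= inordK.
apply: connect_trans (IH (ltnW kn)) (connect1 _).
by rewrite /tree_adj path_tree_mem ?eqxx //; lia.
Qed.

Lemma path_tree_spanning s : spanning_tree (path_tree s).
Proof.
have inj := @perm_inord_inj s.
apply/and3P; split.
- apply/forall_inP => e /imsetP [k _ ->]; rewrite cards2.
  suff -> : s (inord k) != s (inord k.+1) by [].
  by apply/eqP => /inj; have := ltn_ord k; lia.
- rewrite card_imset ?card_ord // => k1 k2 /set2_eq E; apply: val_inj.
  have k1n := ltn_ord k1; have k2n := ltn_ord k2.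
  by case: E => [[/inj E1 /inj E2]|[/inj E1 /inj E2]]; move: E1 E2 => /=; lia.
have sym : connect_sym (tree_adj (path_tree s)).
  by apply: sym_connect_sym => u v; rewrite /tree_adj setUC.
have from0 u : connect (tree_adj (path_tree s)) (s ord0) u.
  by rewrite -[u](permKV s) -[(s^-1)%g u]inord_val; apply: path_tree_connect; rewrite -ltnS.
by apply/forallP => u; apply/forallP => v; rewrite (connect_trans _ (from0 v)) // sym.
Qed.

Lemma perm_map_enum s : perm_eq (map s (enum 'I_n.+1)) (enum 'I_n.+1).
Proof.
apply: uniq_perm; [by rewrite (map_inj_uniq (@perm_inj _ s)) enum_uniq | exact: enum_uniq |].
by move=> u; rewrite mem_enum; apply: perm_onto.
Qed.

Lemma pair_prod_path_tree (R : comNzRingType) s (t : 'I_n.+1 -> R) :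
  pair_prod (fun u v => [set u; v] \notin path_tree s) t (map s (enum 'I_n.+1)) =
  Pseq t (map s (enum 'I_n.+1)).
Proof.
rewrite enum_ord_inord -map_comp pair_prod_iota Pseq_iota.
apply: eq_big_seq => i; rewrite mem_iota => /andP [_ ilt].
rewrite big_seq_cond [RHS]big_seq_cond; apply: eq_bigl => j /=.
case: (boolP (j \in iota 0 n.+1)) => //; rewrite mem_iota => /andP [_ jlt].
by case: (ltnP i j) => //= ij; rewrite path_tree_mem //; lia.
Qed.

Lemma Ps_in_span_pGT (R : comNzRingType) s : exists d : {set {set 'I_n.+1}} -> R,
  forall t : 'I_n.+1 -> R, Ps s t = \sum_(T | spanning_tree T) d T * pGT T t.
Proof.
have sym : symmetric (fun u v : 'I_n.+1 => [set u; v] \notin path_tree s).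
  by move=> u v; rewrite setUC.
have [k Ek] := pair_prod_perm R sym (perm_map_enum s).
exists (fun T => if T == path_tree s then (-1) ^+ k else 0) => t.
rewrite (bigD1 (path_tree s)) ?path_tree_spanning //= eqxx big1 ?addr0; last first.
  by move=> T /andP [_ /negbTE ->]; rewrite mul0r.
by rewrite Ps_Pseq -pair_prod_path_tree Ek pGT_pair_prod.
Qed.

End CompleteGraph.

Lemma connect_exit (T : finType) (e : rel T) (A : pred T) a b :
  connect e a b -> A a -> ~~ A b -> exists u v, [/\ A u, ~~ A v & e u v].
Proof.
move=> /connectP [p ep ->] {b}; elim: p a ep => [|v p IH] a /=; first by move=> _ ->.
move=> /andP [eav ep] Aa; case: (boolP (A v)) => [Av|nAv _]; first exact: IH.
by exists a, v.
Qed.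

Section SpanningTrees.

Variable n : nat.
Implicit Types (T : {set {set 'I_n.+1}}) (W : seq 'I_n.+1).

Definition parent_map T W (par : nat -> nat) := forall i, (0 < i < size W)%N ->
  (par i < i)%N /\ [set nth ord0 W (par i); nth ord0 W i] \in T.

Lemma exists_parent_map T : (forall u v, connect (tree_adj T) u v) ->
  forall k, (k <= n)%N ->
  exists W par, [/\ size W = k, uniq (ord0 :: W) & parent_map T (ord0 :: W) par].
Proof.
move=> conn; elim=> [|k IH] kn; first by exists [::], id; split=> // i; case: i.
have [W [par [sW uW parW]]] := IH (ltnW kn).
have [x xW] : exists x, x \notin ord0 :: W.
  apply/existsP; rewrite -negb_forall; apply/negP => /forallP allW.
  have := uniq_leq_size (enum_uniq 'I_n.+1) (fun y _ => allW y).
  by rewrite size_enum_ord /= sW; lia.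
have [u [v [uinW vW uv]]] :=
  @connect_exit _ _ (fun y => y \in ord0 :: W) _ _ (conn ord0 x) (mem_head _ _) xW.
exists (rcons W v), (fun i => if i == size (ord0 :: W) then index u (ord0 :: W) else par i).
rewrite -rcons_cons rcons_uniq vW uW; split=> [|//|i]; first by rewrite size_rcons sW.
rewrite size_rcons ltnS => /andP [i0 iW]; rewrite !nth_rcons.
case: eqVneq => [->|iW']; first by rewrite index_mem uinW ltnn nth_index.
have ilt : (i < size (ord0 :: W))%N by rewrite ltn_neqAle iW' iW.
by have [pi piT] := parW i (introT andP (conj i0 ilt)); rewrite ilt (ltn_trans pi ilt).
Qed.

Lemma nth_set2_eq W a b c d : uniq W ->
  (a < size W)%N -> (b < size W)%N -> (c < size W)%N -> (d < size W)%N ->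
  [set nth ord0 W a; nth ord0 W b] = [set nth ord0 W c; nth ord0 W d] ->
  (a = c /\ b = d) \/ (a = d /\ b = c).
Proof.
move=> uW aW bW cW dW /set2_eq.
by case=> [[/eqP E1 /eqP E2]|[/eqP E1 /eqP E2]]; [left|right];
  move: E1 E2; rewrite !nth_uniq // => /eqP -> /eqP ->.
Qed.

(* With only [n] edges, the [n] parent edges exhaust [T], so any edge of [T]
   joining two vertices of [W] is the parent edge of the later one. *)
Lemma parent_map_unique T W par : #|T| = n -> size W = n.+1 -> uniq W ->
  parent_map T W par -> forall j k, (j < k < size W)%N ->
  [set nth ord0 W j; nth ord0 W k] \in T -> j = par k.
Proof.
move=> cT sW uW parW.
pose g (m : 'I_n) := [set nth ord0 W (par m.+1); nth ord0 W m.+1].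
have parS (m : 'I_n) : (par m.+1 < m.+1)%N /\ g m \in T.
  by apply: parW; rewrite sW !ltnS ltn_ord.
have g_inj : injective g.
  move=> m1 m2 E; apply: ord_inj; have [p1 _] := parS m1; have [p2 _] := parS m2.
  have m1n := ltn_ord m1; have m2n := ltn_ord m2.
  have [||||[_ /eq_add_S //]|[]] := nth_set2_eq uW _ _ _ _ E; rewrite ?sW; lia.
have gT : [set g m | m in 'I_n] = T.
  apply/eqP; rewrite eqEcard card_imset // card_ord cT leqnn andbT.
  by apply/subsetP => _ /imsetP [m _ ->]; have [] := parS m.
move=> j k /andP [jk kW]; rewrite -gT => /imsetP [m _ E].
have [pm _] := parS m; have mn := ltn_ord m.
have [||||[-> ->] //|[]] := nth_set2_eq uW _ _ _ _ E; rewrite ?sW; lia.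
Qed.

Lemma parent_map_tree_order T W par : #|T| = n -> size W = n.+1 -> uniq W ->
  parent_map T W par -> tree_order (fun u v => [set u; v] \notin T) W.
Proof.
move=> cT sW uW parW p x q EW p0.
have kW : (size p < size W)%N by rewrite EW size_cat size_rcons addSn ltnS leq_addr.
have Wj j : (j < size p)%N -> nth ord0 W j = nth ord0 p j.
  by move=> jk; rewrite EW nth_cat size_rcons ltnS ltnW // nth_rcons jk.
have Wk : nth ord0 W (size p) = x by rewrite EW nth_cat size_rcons ltnSn nth_rcons ltnn eqxx.
have [park parT] : (par (size p) < size p)%N /\ [set nth ord0 W (par (size p)); x] \in T.
  by rewrite -Wk; apply: parW; rewrite kW lt0n size_eq0 p0.
exists (nth ord0 W (par (size p))); first by rewrite Wj // mem_nth.
move=> u up; have jk : (index u p < size p)%N by rewrite index_mem.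
have Wu : nth ord0 W (index u p) = u by rewrite Wj // nth_index.
rewrite -Wu -Wk; congr (~~ _); apply/idP/eqP => [uxT|->]; last by rewrite Wk.
by rewrite (parent_map_unique cT sW uW parW _ uxT) // jk.
Qed.

Lemma spanning_tree_order T : spanning_tree T -> exists W,
  [/\ perm_eq (ord0 :: W) (enum 'I_n.+1), uniq (ord0 :: W)
    & tree_order (fun u v => [set u; v] \notin T) (ord0 :: W)].
Proof.
case/and3P => _ /eqP cT /forallP conn.
have [W [par [sW uW parW]]] := exists_parent_map (fun u v => forallP (conn u) v) (leqnn n).
exists W; split=> //; last by apply: parent_map_tree_order cT _ uW parW; rewrite /= sW.
apply: uniq_perm => [//||x]; first exact: enum_uniq.
have [] := uniq_min_size uW (fun y _ => mem_enum _ y); last by move=> _ ->.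
by rewrite size_enum_ord /= sW.
Qed.

End SpanningTrees.

Section PathPolynomials.

Variable n : nat.
Implicit Types (s : {perm 'I_n.+1}) (T : {set {set 'I_n.+1}}).

Lemma perm_eq_enum_map (l : seq 'I_n.+1) :
  perm_eq l (enum 'I_n.+1) -> exists s, l = map s (enum 'I_n.+1).
Proof.
rewrite -val_ord_tuple => /tuple_permP [s ->]; exists s.
by rewrite /= -map_comp enumT; apply: eq_map => i /=; rewrite tnth_ord_tuple.
Qed.

Lemma map_enum_inj s1 s2 : map s1 (enum 'I_n.+1) = map s2 (enum 'I_n.+1) -> s1 = s2.
Proof. by move/eq_in_map => E; apply/permP => i; apply: E; rewrite mem_enum. Qed.

Lemma head_map_enum s : head ord0 (map s (enum 'I_n.+1)) = s ord0.
Proof. by rewrite -nth0 (nth_map ord0) ?size_enum_ord // (nth_ord_enum _ ord0). Qed.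

Lemma Pspan_Ps (R : comNzRingType) (f : ('I_n.+1 -> R) -> R) :
  Pspan (rooted_perm (enum 'I_n.+1) ord0) f ->
  exists c : {perm 'I_n.+1} -> R, forall t, f t = \sum_(s | fix0 s) c s * Ps s t.
Proof.
move=> [L [GL Ef]].
exists (fun s => \sum_(cl <- L | cl.2 == map s (enum 'I_n.+1)) cl.1) => t.
have Lperm cl : cl \in L -> exists2 s, fix0 s & cl.2 = map s (enum 'I_n.+1).
  move=> /(allP GL) /andP [/perm_eq_enum_map [s Es] hl]; exists s => //.
  by rewrite /fix0 -head_map_enum -Es.
rewrite Ef (eq_bigr (fun s => \sum_(cl <- L)
    (if cl.2 == map s (enum 'I_n.+1) then cl.1 * Ps s t else 0))); last first.
  by move=> s _; rewrite big_mkcond mulr_suml; apply: eq_bigr => cl _; case: ifP; rewrite ?mul0r.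
rewrite exchange_big /=; apply: eq_big_seq => cl /Lperm [s0 fs0 E0].
rewrite -big_mkcondr (big_pred1 s0) => [|s]; first by rewrite Ps_Pseq E0.
by rewrite /= E0; apply/andP/eqP => [[_ /eqP /map_enum_inj]|->].
Qed.

Lemma pGT_in_span_Ps (R : comNzRingType) T : spanning_tree T ->
  exists c : {perm 'I_n.+1} -> R, forall t, pGT T t = \sum_(s | fix0 s) c s * Ps s t.
Proof.
move=> /spanning_tree_order [W [WE uW ordW]].
pose P u v := [set u; v] \notin T.
have symP : symmetric P by move=> u v; rewrite /P setUC.
have [k Ek] := pair_prod_perm R symP (etrans (perm_sym _ _) WE).
apply: Pspan_Ps; apply: (@Pspan_ext _ _ _ (fun t => (-1) ^+ k * pair_prod P t (ord0 :: W))).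
  by move=> t; rewrite pGT_pair_prod Ek.
apply/Pspan_scale; apply: (Pspan_sub _ (Pspan_pair_prod R uW ordW)) => l /andP [lW hl].
by apply/andP; split; first exact: perm_trans lW WE.
Qed.

Lemma enum_ord_behead : enum 'I_n.+1 = ord0 :: behead (enum 'I_n.+1).
Proof. by rewrite enum_ord_inord /=; congr (_ :: _); apply: val_inj; rewrite /= inordK. Qed.

Lemma map_enum_fix0 s : fix0 s -> map s (enum 'I_n.+1) = ord0 :: behead (map s (enum 'I_n.+1)).
Proof. by move=> /eqP s0; rewrite enum_ord_behead /= s0. Qed.

Lemma Ps_shift (R : comNzRingType) s (t : 'I_n.+1 -> R) :
  Ps s (ext (fun j => t (lift ord0 j) - t ord0)) = Ps s t.
Proof.
rewrite !Ps_Pseq -(Pseq_shift t (t ord0)); apply: Pseq_eq => i _.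
by rewrite /ext; case: unliftP => [j ->|->] //; rewrite subrr.
Qed.

Lemma Ps_free (R : numDomainType) (c : {perm 'I_n.+1} -> R) :
  (forall t : 'I_n.+1 -> R, \sum_(s | fix0 s) c s * Ps s t = 0) -> forall s, fix0 s -> c s = 0.
Proof.
move=> sum0 s fs; pose idx := [seq s <- index_enum {perm 'I_n.+1} | fix0 s].
apply: (@Pseq_free R _ _ ord0 (behead (enum 'I_n.+1)) idx
  (fun s => behead (map s (enum 'I_n.+1)))).
- by rewrite -enum_ord_behead enum_uniq.
- rewrite map_inj_in_uniq ?filter_uniq ?index_enum_uniq // => s1 s2.
  rewrite !mem_filter => /andP [f1 _] /andP [f2 _] E.
  by apply: map_enum_inj; rewrite map_enum_fix0 // [RHS]map_enum_fix0 // E.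
- move=> s'; rewrite mem_filter => /andP [fs' _].
  by rewrite -(perm_cons ord0) -map_enum_fix0 // -enum_ord_behead perm_map_enum.
- move=> t; rewrite -[RHS](sum0 t) big_filter; apply: eq_bigr => s' fs'.
  by rewrite Ps_Pseq -map_enum_fix0.
- by rewrite mem_filter fs mem_index_enum.
Qed.

End PathPolynomials.

Theorem corollary3p2 (R : realFieldType) (n : nat) :
  (* each P_s lies in span{ p_{G\T} : T spanning tree } *)
  (forall s : {perm 'I_n.+1}, fix0 s ->
     exists d : {set {set 'I_n.+1}} -> R,
       forall t : 'I_n -> R,
         Ps s (ext t) = \sum_(T | spanning_tree T) d T * pGT T (ext t)) /\
  (* each p_{G\T} lies in span{ P_s : s in S_n } *)
  (forall T : {set {set 'I_n.+1}}, spanning_tree T ->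
     exists c : {perm 'I_n.+1} -> R,
       forall t : 'I_n -> R,
         pGT T (ext t) = \sum_(s | fix0 s) c s * Ps s (ext t)) /\
  (* the P_s, s in S_n, are linearly independent *)
  (forall c : {perm 'I_n.+1} -> R,
     (forall t : 'I_n -> R, \sum_(s | fix0 s) c s * Ps s (ext t) = 0) ->
     forall s, fix0 s -> c s = 0).
Proof.
split; first by move=> s _; have [d Ed] := Ps_in_span_pGT R s; exists d.
split; first by move=> T /(pGT_in_span_Ps R) [c Ec]; exists c.
move=> c sum0; apply: Ps_free => t; rewrite -[RHS](sum0 (fun j => t (lift ord0 j) - t ord0)).
by apply: eq_bigr => s _; rewrite Ps_shift.
Qed.
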